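(* For integers $n\geq 1$ and $r\geq 1$, \[ \sum_{k=0}^n {n \brace k}_r(-1)^{k+r-1}D_{k+r-1}=B_{n-1,r}. \]
   Context: $D_n$ is the $n$-th derangement number. For $r\geq0$, ${n \brace k}_r$ is the $r$-Stirling number of the second kind: the number of partitions of $\{1,\dots,n+r\}$ into $k+r$ nonempty blocks with $1,\dots,r$ in distinct blocks. $B_{n,r}$ is the $r$-Bell number, defined by $\sum_{n\geq0}B_{n,r}\frac{t^n}{n!}=e^{e^t-1+rt}$ (equivalently $B_{n,r}=\sum_k{n\brace k}_r$). *)

From mathcomp Require Import all_boot all_order all_algebra all_fingroup.
Set Implicit Arguments. Unset Strict Implicit. Unset Printing Implicit Defensive.
Import GRing.Theory.

Definition derangement (n : nat) : nat :=
  #|[set s : {perm 'I_n} | [forall i, s i != i]]|.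

Definition rstirling2 (n k r : nat) : nat :=
  #|[set P : {set {set 'I_(n + r)}} |
      [&& partition P [set: 'I_(n + r)], #|P| == k + r &
          [forall i : 'I_(n + r), forall j : 'I_(n + r),
             [&& i < r, j < r & i != j] ==> (pblock P i != pblock P j)]]]|.

(* r-Bell number B_{n,r} = sum_k {n brace k}_r (blocks number k+r <= n+r). *)
Definition rbell (n r : nat) : nat := \sum_(k < n.+1) rstirling2 n k r.

(* Put g j = (-1)^(j-1) D_(j-1).  Inclusion-exclusion over the set of moved
   points gives D_n = sum_k (-1)^(n-k) C(n,k) k!, hence D_(j+1) = (j+1) D_j +
   (-1)^(j+1), i.e. j g(j) + g(j+1) = 1.  The left-hand side is the sum of
   g(#P) over the r-partitions P of an (n+r)-set.  Classifying them by the
   block of a point x that is not distinguished -- either the singleton {x},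
   or x added to one of the #Q blocks of an r-partition Q of the other points --
   rewrites it as the sum over Q of #Q g(#Q) + g(#Q+1) = 1, which is B_(n-1,r). *)

From mathcomp Require Import all_boot all_order all_algebra all_fingroup.
Set Implicit Arguments. Unset Strict Implicit. Unset Printing Implicit Defensive.
Import GRing.Theory.
Local Open Scope ring_scope.

Section SubsetSums.
Variable T : finType.
Implicit Types A B C S : {set T}.

Lemma sum_subsets_by_card (V : nmodType) S (G : nat -> V) :
  \sum_(X : {set T} | X \subset S) G #|X| = \sum_(k < #|S|.+1) G k *+ 'C(#|S|, k).
Proof.
rewrite (partition_big (fun X : {set T} => inord #|X| : 'I_#|S|.+1) xpredT) //=.
apply: eq_bigr => k _; rewrite -cards_draws cardsE -sumr_const.
rewrite (eq_bigl (fun X : {set T} => (X \subset S) && (#|X| == k))) /=.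
  by apply: eq_bigr => X /andP[_ /eqP->].
move=> X; case XS: (X \subset S) => //=.
by rewrite -val_eqE /= inordK // ltnS subset_leq_card.
Qed.

Lemma sum_subsets_sign (R : pzRingType) S :
  \sum_(X : {set T} | X \subset S) (-1) ^+ #|X| = (S == set0)%:R :> R.
Proof.
rewrite sum_subsets_by_card -cards_eq0.
transitivity ((1 - 1 : R) ^+ #|S|); last by rewrite subrr expr0n.
by rewrite exprBn_comm; [apply: eq_bigr => i _; rewrite !expr1n !mulr1 | exact: commr1].
Qed.

Lemma sum_interval_sign (R : pzRingType) A C : C \subset A ->
  \sum_(B : {set T} | (B \subset A) && (C \subset B)) (-1) ^+ #|A :\: B| = (C == A)%:R :> R.
Proof.
move=> CA; have -> : (C == A) = (A :\: C == set0) by rewrite setD_eq0 eqEsubset CA.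
rewrite -sum_subsets_sign [RHS](reindex_onto (fun X => A :\: X) (fun B => A :\: B)) /=.
  apply: eq_bigl => B; rewrite setDDr setDv set0U.
  apply/andP/andP => [[BA CB]|[ACAB /eqP/setIidPr BA]].
    by split; [exact: setDS | exact/eqP/setIidPr].
  split=> //; apply/subsetP => y yC; have yA := subsetP CA y yC.
  by apply: contraT => yB; have := subsetP ACAB y; rewrite !inE yA yB yC => /(_ isT).
move=> X XAC; rewrite setDDr setDv set0U; apply/setIidPr.
exact: subset_trans XAC (subsetDl A C).
Qed.

Lemma subset_moebius (R : pzRingType) (f F : {set T} -> R) :
  (forall A, F A = \sum_(B : {set T} | B \subset A) f B) ->
  forall A, f A = \sum_(B : {set T} | B \subset A) (-1) ^+ #|A :\: B| * F B.
Proof.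
move=> Ff A; under eq_bigr => B _ do rewrite Ff mulr_sumr.
rewrite (exchange_big_dep (fun C : {set T} => C \subset A)) /=; last first.
  by move=> B C BA CB; apply: subset_trans CB BA.
under eq_bigr => C CA do rewrite -mulr_suml (sum_interval_sign R CA).
rewrite (bigD1 A) //= eqxx mul1r big1 ?addr0 // => C /andP[_ /negbTE->].
by rewrite mul0r.
Qed.
End SubsetSums.

Lemma card_perm_on_by_support (T : finType) (A : {set T}) :
  #|perm_on A| = (\sum_(B : {set T} | B \subset A)
                    #|[set s : {perm T} | [set x | s x != x] == B]|)%N.
Proof.
rewrite -sum1_card (partition_big (fun s : {perm T} => [set x | s x != x])
   (fun B => B \subset A)) /=; last first.
  by move=> s sA; apply/subsetP => x; rewrite inE => sx; apply: (subsetP sA).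
apply: eq_bigr => B BA; rewrite sum1dep_card; apply: eq_card => s.
rewrite !inE; case: eqP => [e|_]; rewrite ?andbF ?andbT //.
by apply/subsetP => y sy; apply: (subsetP BA); rewrite -e inE.
Qed.

Lemma derangementE (R : pzRingType) n :
  (derangement n)%:R = \sum_(k < n.+1) (-1) ^+ (n - k) * k`!%:R *+ 'C(n, k) :> R.
Proof.
pose f (B : {set 'I_n}) : R := #|[set s : {perm 'I_n} | [set x | s x != x] == B]|%:R.
have Ff (A : {set 'I_n}) : #|A|`!%:R = \sum_(B : {set 'I_n} | B \subset A) f B.
  by rewrite -card_perm card_perm_on_by_support natr_sum.
have -> : (derangement n)%:R = f [set: 'I_n].
  congr _%:R; apply: eq_card => s; rewrite !inE.
  apply/forallP/eqP => [moves|e i]; first by apply/setP => i; rewrite !inE moves.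
  by move: (in_setT i); rewrite -e inE.
rewrite (subset_moebius Ff) -[in RHS](card_ord n) -cardsT.
rewrite -(sum_subsets_by_card _ (fun k => (-1) ^+ (#|[set: 'I_n]| - k) * k`!%:R)).
by apply: eq_bigr => B _; rewrite cardsDS ?subsetT.
Qed.

Lemma derangementS (R : pzRingType) n :
  (derangement n.+1)%:R = (derangement n)%:R *+ n.+1 + (-1) ^+ n.+1 :> R.
Proof.
rewrite !derangementE big_ord_recl subn0 fact0 bin0 mulr1n mulr1 addrC -sumrMnl.
congr (_ + _); apply: eq_bigr => i _.
rewrite lift0 subSS -!mulrnAr -!mulrnA; congr (_ * _%:R).
by rewrite factS -mulnA mulnCA -mul_bin_diag (mulnC n.+1).
Qed.

Lemma signed_derangement_step (R : pzRingType) j :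
  ((-1) ^+ j.-1 * (derangement j.-1)%:R) *+ j + (-1) ^+ j * (derangement j)%:R = 1 :> R.
Proof.
case: j => [|j].
  by rewrite mulr0n add0r expr0 mul1r derangementE big_ord1 /= mul1r.
rewrite /= derangementS exprS mulrDr mulN1r mulNr -mulrnAr addNKr mulrNN.
by rewrite -expr2 -exprM mulnC exprM sqrrN !expr1n.
Qed.

Section PointInsertion.
Variables (T : finType) (x : T).
Implicit Types (P Q : {set {set T}}) (B C D : {set T}).

Definition drop_point P := [set B :\ x | B in P].
Definition insert_point Q C := (x |: C) |: (Q :\ C).

Lemma setD1_notin B : x \notin B -> B :\ x = B.
Proof. by move=> xB; apply/setDidPl; rewrite disjoint_sym disjoints1. Qed.

Lemma notin_block D Q B : partition Q D -> x \notin D -> B \in Q -> x \notin B.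
Proof. by move=> pQ xD BQ; apply: contra xD; apply/subsetP/(partitionS pQ). Qed.

Lemma partition_drop_point D P :
  partition P D -> [set x] \notin P -> partition (drop_point P) (D :\ x).
Proof.
move=> pP xP; have [cP tP P0] := and3P pP.
have nonempty : set0 \notin drop_point P.
  apply/imsetP => -[B BP /esym/eqP]; rewrite setD_eq0 subset1.
  by case/orP=> /eqP eB; [move: xP | move: P0]; rewrite -eB BP.
have [tQ _] : trivIset (drop_point P) /\ {in P &, injective (fun B => B :\ x)}.
  apply: trivIimset nonempty => B1 B2 B1P B2P ne.
  apply: disjointWl (subsetDl B1 _) (disjointWr (subsetDl B2 _) _).
  by apply: (trivIsetP tP) => //; rewrite eq_sym.
apply/and3P; split=> //; rewrite cover_imset -(eqP cP).
apply/eqP/setP => y; rewrite !inE; apply/bigcupP/andP => [[B BP]|[yx /bigcupP[B BP yB]]].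
  by rewrite !inE => /andP[yx yB]; split=> //; apply/bigcupP; exists B.
by exists B; rewrite // !inE yx.
Qed.

Lemma partition_insert_point D Q C :
  x \in D -> partition Q (D :\ x) -> C \in Q -> partition (insert_point Q C) D.
Proof.
move=> xD pQ CQ; have xC := notin_block pQ (negbT (setD11 x D)) CQ.
have CD := partitionS pQ CQ.
have /(partitionU1 (partitionD1 pQ CQ)) : x |: C != set0.
  by apply/set0Pn; exists x; rewrite setU11.
have -> : (x |: C) :|: ((D :\ x) :\: C) = D.
  apply/setP => y; rewrite !inE; case: (y =P x) => [->|yx] //=.
  by case yC: (y \in C) => //=; have := subsetP CD y yC; rewrite !inE => /andP[].
apply; rewrite -setI_eq0; apply/eqP/setP => y; rewrite !inE.
by case: (y =P x) => [->|_]; rewrite ?(negbTE xC) //=; case: (y \in C); rewrite ?andbF.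
Qed.

Lemma drop_insert_point D Q C :
  partition Q (D :\ x) -> C \in Q -> drop_point (insert_point Q C) = Q.
Proof.
move=> pQ CQ; have xQ := notin_block pQ (negbT (setD11 x D)).
rewrite /drop_point /insert_point imsetU1 setU1K ?xQ //.
rewrite -[in RHS](setD1K CQ) -[in RHS](imset_id (Q :\ C)); congr (_ |: _).
by apply: eq_in_imset => B /setD1P[_ /xQ /setD1_notin].
Qed.

Lemma pblock_insert_point D Q C : x \in D -> partition Q (D :\ x) -> C \in Q ->
  pblock (insert_point Q C) x = x |: C.
Proof.
move=> xD pQ CQ; have pI := partition_insert_point xD pQ CQ.
by apply: def_pblock (setU11 _ _) (setU11 _ _); apply: partition_trivIset pI.
Qed.

Lemma insert_drop_point D P : partition P D -> x \in D -> [set x] \notin P ->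
  insert_point (drop_point P) (pblock P x :\ x) = P.
Proof.
move=> pP xD xP; have tP := partition_trivIset pP.
rewrite -(cover_partition pP) in xD.
have BxP := pblock_mem xD; have xBx := mem_pblock P x; rewrite xD in xBx.
set Bx := pblock P x in BxP xBx *.
have dropP : drop_point P = (Bx :\ x) |: (P :\ Bx).
  rewrite /drop_point -{1}(setD1K BxP) imsetU1 -[in RHS](imset_id (P :\ Bx)).
  congr (_ |: _); apply: eq_in_imset => B /setD1P[BBx BP].
  apply: setD1_notin; apply: contra BBx => xB.
  by rewrite -(def_pblock tP BP xB).
have BxxP : Bx :\ x \notin P :\ Bx.
  apply/setD1P => -[ne BP]; have /set0Pn[y yB] := partition_neq0 pP BP.
  have yBx : y \in Bx by move: yB; rewrite inE => /andP[].
  by move: ne; rewrite -(def_pblock tP BP yB) (def_pblock tP BxP yBx) eqxx.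
by rewrite /insert_point dropP setU1K // setD1K // setD1K.
Qed.

Lemma card_insert_point D Q C :
  partition Q (D :\ x) -> C \in Q -> #|insert_point Q C| = #|Q|.
Proof.
move=> pQ CQ; rewrite cardsU1 [in RHS](cardsD1 C) CQ; congr (nat_of_bool _ + _)%N.
apply/setD1P => -[_ xCQ].
by have := notin_block pQ (negbT (setD11 x D)) xCQ; rewrite setU11.
Qed.
End PointInsertion.

Section RPartitions.
Variable T : finType.
Implicit Types (P Q : {set {set T}}) (B C D R : {set T}).

(* For partitions of a superset of R this is the distinct-blocks condition of
   rstirling2 (separatesP); in this form it is local to the blocks. *)
Definition separates R P := [forall B in P, #|B :&: R| <= 1]%N.

Definition rpartition R D P := partition P D && separates R P.

Definition rpartition_sum (V : nmodType) R D (g : nat -> V) :=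
  \sum_(P | rpartition R D P) g #|P|.

Lemma separatesP R D P : partition P D -> R \subset D ->
  reflect {in R &, injective (pblock P)} (separates R P).
Proof.
move=> pP RD; have tP := partition_trivIset pP.
apply: (iffP forall_inP) => [sep i j iR jR eij | inj B BP].
  have iP : i \in cover P by rewrite (cover_partition pP) (subsetP RD).
  apply: (card_le1_eqP (sep _ (pblock_mem iP))); rewrite inE ?mem_pblock ?iP //.
  by rewrite eij mem_pblock (cover_partition pP) (subsetP RD).
apply/card_le1_eqP => i j /setIP[iB iR] /setIP[jB jR]; apply: inj => //.
by rewrite (def_pblock tP BP iB) (def_pblock tP BP jB).
Qed.

Lemma separatesS R P Q : Q \subset P -> separates R P -> separates R Q.
Proof. by move=> QP /forall_inP sep; apply/forall_inP => B /(subsetP QP)/sep. Qed.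

Lemma separatesU1 R B P :
  separates R (B |: P) = (#|B :&: R| <= 1)%N && separates R P.
Proof.
apply/forall_inP/andP => [sep | [sB /forall_inP sP] B']; last first.
  by case/setU1P => [->|/sP].
by split; [apply: sep; rewrite setU11 | apply/forall_inP => B' B'P; apply/sep/setU1r].
Qed.

Section PointRemoval.
Variables (V : nmodType) (R D : {set T}) (x : T) (g : nat -> V).
Hypotheses (xD : x \in D) (xR : x \notin R).

Lemma setD1I_notin B : (B :\ x) :&: R = B :&: R.
Proof.
by apply/setP => y; rewrite !inE; case: (y =P x) => [->|]; rewrite ?(negbTE xR) ?andbF.
Qed.

Lemma setU1I_notin B : (x |: B) :&: R = B :&: R.
Proof.
rewrite setIUl (_ : [set x] :&: R = set0) ?set0U //.
by apply/disjoint_setI0; rewrite disjoints1.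
Qed.

Lemma separates_drop_point P : separates R (drop_point x P) = separates R P.
Proof.
apply/forall_inP/forall_inP => sep B.
  by move=> BP; rewrite -setD1I_notin; apply/sep/imset_f.
by case/imsetP => B' B'P ->; rewrite setD1I_notin sep.
Qed.

Lemma rpartition_drop_point P : rpartition R D P -> [set x] \notin P ->
  rpartition R (D :\ x) (drop_point x P).
Proof.
by case/andP=> pP sP xP; rewrite /rpartition partition_drop_point // separates_drop_point.
Qed.

Lemma rpartition_insert_point Q C : rpartition R (D :\ x) Q -> C \in Q ->
  rpartition R D (insert_point x Q C) && ([set x] \notin insert_point x Q C).
Proof.
case/andP=> pQ sQ CQ; have xQ := notin_block pQ (negbT (setD11 x D)).
rewrite /rpartition partition_insert_point //= separatesU1 setU1I_notin.
rewrite (forall_inP sQ _ CQ) (separatesS (subsetDl Q [set C]) sQ) /=.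
rewrite !inE negb_or negb_and (contraL (xQ _) (set11 x)) orbT andbT.
apply/eqP => e; have /set0Pn[c cC] := partition_neq0 pQ CQ.
have /set1P ec : c \in [set x] by rewrite e setU1r.
by move: (xQ C CQ); rewrite -ec cC.
Qed.

Lemma sum_rpartitions_singleton :
  \sum_(P | rpartition R D P && ([set x] \in P)) g #|P|
  = \sum_(Q | rpartition R (D :\ x) Q) g #|Q|.+1.
Proof.
rewrite (reindex_onto (fun Q => [set x] |: Q) (fun P => P :\ [set x])) /=; last first.
  by move=> P /andP[_ xP]; rewrite setD1K.
have x_not_block Q : partition Q (D :\ x) -> [set x] \notin Q.
  by move=> pQ; apply: contraL (set11 x); apply: notin_block pQ (negbT (setD11 x D)).
apply: eq_big => [Q|Q /andP[_ /eqP QE]]; last first.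
  by rewrite cardsU1 -{1}QE setD11.
rewrite setU11 andbT /rpartition separatesU1.
have -> : [set x] :&: R = set0 by apply/disjoint_setI0; rewrite disjoints1.
rewrite cards0 /=; apply/andP/andP => [[/andP[pxQ sQ] /eqP QE] | [pQ sQ]].
  by split=> //; rewrite -QE; apply: partitionD1 pxQ (setU11 _ _).
have pxQ : partition ([set x] |: Q) D.
  rewrite -(setD1K xD); apply: partitionU1 pQ _ _.
    by apply/set0Pn; exists x; rewrite set11.
  by rewrite disjoints1 setD11.
by rewrite pxQ sQ setU1K ?x_not_block.
Qed.

Lemma sum_rpartitions_nonsingleton :
  \sum_(P | rpartition R D P && ([set x] \notin P)) g #|P|
  = \sum_(Q | rpartition R (D :\ x) Q) g #|Q| *+ #|Q|.
Proof.
transitivity (\sum_(Q | rpartition R (D :\ x) Q) \sum_(C in Q) g #|Q|); last first.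
  by apply: eq_bigr => Q _; rewrite sumr_const.
rewrite pair_big_dep /= (reindex_onto (fun QC => insert_point x QC.1 QC.2)
  (fun P => (drop_point x P, pblock P x :\ x))) /=; last first.
  by move=> P /andP[/andP[pP _] xP]; rewrite (insert_drop_point pP xD xP).
rewrite (eq_bigl (fun QC => rpartition R (D :\ x) QC.1 && (QC.2 \in QC.1))) => [|[Q C] /=].
  by apply: eq_bigr => -[Q C] /andP[/andP[pQ _] CQ]; rewrite (card_insert_point pQ CQ).
apply/idP/andP => [/andP[/andP[rI xI] /eqP[QE CE]] | [rQ CQ]].
  split; first by rewrite -QE rpartition_drop_point.
  rewrite -QE -{1}CE; apply/imset_f/pblock_mem.
  by case/andP: rI => /cover_partition->.
have pQ : partition Q (D :\ x) by case/andP: rQ.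
rewrite rpartition_insert_point // (drop_insert_point pQ CQ) (pblock_insert_point xD pQ CQ).
by rewrite setU1K ?eqxx // (notin_block pQ (negbT (setD11 x D)) CQ).
Qed.

Lemma rpartition_sum_D1 :
  rpartition_sum R D g = rpartition_sum R (D :\ x) (fun j => g j *+ j + g j.+1).
Proof.
rewrite /rpartition_sum (bigID (fun P => [set x] \in P)) /=.
by rewrite sum_rpartitions_singleton sum_rpartitions_nonsingleton addrC -big_split.
Qed.
End PointRemoval.
End RPartitions.

Section Relabelling.
Variables (T U : finType) (f : T -> U).
Hypothesis injf : injective f.

Lemma separates_imset (R : {set T}) (P : {set {set T}}) :
  separates (f @: R) [set f @: (B : {set T}) | B in P] = separates R P.
Proof.
have cardI (B : {set T}) : #|f @: B :&: f @: R| = #|B :&: R|.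
  by rewrite -imsetI ?card_imset // => ? ? _ _; apply: injf.
apply/forall_inP/forall_inP => sep B; last by case/imsetP=> B' B'P ->; rewrite cardI sep.
by move=> BP; rewrite -cardI sep ?imset_f.
Qed.

Lemma rpartition_sum_imset (V : nmodType) (R D : {set T}) (g : nat -> V) :
  rpartition_sum (f @: R) (f @: D) g = rpartition_sum R D g.
Proof.
pose im (P : {set {set T}}) := [set f @: (B : {set T}) | B in P].
pose pre (Q : {set {set U}}) := [set f @^-1: (B : {set U}) | B in Q].
have preK P : pre (im P) = P.
  rewrite /pre /im -imset_comp -[RHS]imset_id; apply: eq_imset => B /=.
  by apply/setP => y; rewrite inE mem_imset.
rewrite /rpartition_sum (reindex_onto im pre) /=.
  apply: eq_big => [P|P _]; last by rewrite card_imset //; apply: imset_inj.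
  by rewrite preK eqxx andbT /rpartition /im imset_partition // separates_imset.
move=> Q /andP[pQ _]; rewrite /im /pre -imset_comp -[RHS]imset_id.
apply: eq_in_imset => B /(partitionS pQ) BfD /=; apply/setP => y.
apply/imsetP/idP => [[z] | yB]; first by rewrite inE => fz ->.
by have /imsetP[z _ yz] := subsetP BfD y yB; exists z; rewrite // inE -yz.
Qed.
End Relabelling.

Definition ord_prefix N r : {set 'I_N} := [set i : 'I_N | (i < r)%N].

Lemma imset_widen_ord_prefix m N r (mN : (m <= N)%N) : (r <= m)%N ->
  widen_ord mN @: ord_prefix m r = ord_prefix N r.
Proof.
move=> rm; apply/setP => i; rewrite inE; apply/imsetP/idP => [[j] | ir].
  by rewrite inE => jr ->.
by exists (Ordinal (leq_trans ir rm)); rewrite ?inE //; apply: val_inj.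
Qed.

Lemma card_ord_prefix N r : (r <= N)%N -> #|ord_prefix N r| = r.
Proof.
move=> rN; rewrite -(imset_widen_ord_prefix rN (leqnn r)) card_imset.
  rewrite (_ : ord_prefix r r = setT) ?cardsT ?card_ord //.
  by apply/setP => i; rewrite !inE ltn_ord.
by move=> i j /(congr1 val) /= /val_inj.
Qed.

Lemma imset_widen_ord_max N : widen_ord (leqnSn N) @: setT = setT :\ @ord_max N.
Proof.
apply/setP => i; rewrite !inE andbT; apply/imsetP/idP => [[j _ ->] | iN].
  by rewrite -val_eqE /= neq_ltn ltn_ord.
have iN' : (i < N)%N by rewrite ltn_neqAle -ltnS ltn_ord andbT; move: iN; rewrite -val_eqE.
by exists (Ordinal iN'); rewrite ?inE //; apply: val_inj.
Qed.

Lemma rpartition_ord_bounds N r (P : {set {set 'I_N}}) : (r <= N)%N ->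
  rpartition (ord_prefix N r) setT P -> (r <= #|P| <= N)%N.
Proof.
move=> rN /andP[pP /(separatesP pP (subsetT _)) inj]; apply/andP; split.
  rewrite -{1}(card_ord_prefix rN) -(card_in_imset inj); apply: subset_leq_card.
  apply/subsetP => _ /imsetP[i _ ->]; apply: pblock_mem.
  by rewrite (cover_partition pP).
rewrite -[X in (_ <= X)%N](card_ord N) -cardsT (card_partition pP) -sum1_card.
by apply: leq_sum => B BP; rewrite card_gt0 (partition_neq0 pP BP).
Qed.

Lemma rstirling2E n k r : rstirling2 n k r =
  #|[set P | rpartition (ord_prefix (n + r) r) setT P & #|P| == (k + r)%N]|.
Proof.
apply: eq_card => P; rewrite !inE /rpartition andbAC -andbA.
case pP: (partition P setT) => //=; congr (_ && _).
apply/forallP/(separatesP pP (subsetT _)) => [sep i j | inj i].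
  rewrite !inE => ir jr /eqP; apply: contraTeq => ij.
  by have /forallP/(_ j)/implyP := sep i; apply; rewrite ir jr ij.
apply/forallP => j; apply/implyP => /and3P[ir jr]; apply: contra => /eqP/inj.
by rewrite !inE => /(_ ir jr)->.
Qed.

Lemma sum_rstirling2 (V : nmodType) n r (G : nat -> V) :
  \sum_(k < n.+1) G (k + r)%N *+ rstirling2 n k r
  = rpartition_sum (ord_prefix (n + r) r) setT G.
Proof.
have rnr : (r <= n + r)%N by rewrite leq_addl.
rewrite /rpartition_sum [RHS](partition_big
  (fun P : {set {set 'I_(n + r)}} => inord (#|P| - r) : 'I_n.+1) xpredT) //=.
apply: eq_bigr => k _; rewrite rstirling2E cardsE -sumr_const.
apply: eq_big => P; rewrite unfold_in /=; last by case/andP=> _ /eqP->.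
case rP: (rpartition _ _ P) => //=.
have /andP[rP' Pnr] := rpartition_ord_bounds rnr rP.
rewrite -val_eqE /= inordK; last by rewrite ltnS leq_subLR (addnC r).
by apply/eqP/eqP => [->|<-]; rewrite ?subnK ?addnK.
Qed.

Lemma rpartition_sum_ord_max (V : nmodType) N r (g : nat -> V) : (r <= N)%N ->
  rpartition_sum (ord_prefix N.+1 r) setT g
  = rpartition_sum (ord_prefix N r) setT (fun j => g j *+ j + g j.+1).
Proof.
move=> rN; rewrite (rpartition_sum_D1 _ (in_setT ord_max)); last first.
  by rewrite inE -leqNgt.
rewrite -imset_widen_ord_max -(imset_widen_ord_prefix (leqnSn N) rN).
by apply: rpartition_sum_imset => i j /(congr1 val) /= /val_inj.
Qed.

Theorem corollary1 (n r : nat) (hn : (1 <= n)%N) (hr : (1 <= r)%N) :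
  \sum_(k < n.+1)
     (rstirling2 n k r)%:Z * (-1) ^+ (k + r - 1) * (derangement (k + r - 1))%:Z
  = (rbell (n - 1) r)%:Z.
Proof.
(* The identity also holds for r = 0. *)
case: n hn => // n _; rewrite subn1 /=.
pose g j : int := (-1) ^+ (j - 1) * (derangement (j - 1))%:Z.
have g_step j : g j *+ j + g j.+1 = 1.
  by rewrite /g !subn1 -!natz signed_derangement_step.
transitivity (\sum_(k < n.+2) g (k + r)%N *+ rstirling2 n.+1 k r).
  by apply: eq_bigr => k _; rewrite -mulrA -natz mulr_natl.
rewrite sum_rstirling2 (rpartition_sum_ord_max _ (leq_addl n r)).
rewrite /rpartition_sum; under eq_bigr => P _ do rewrite g_step.
rewrite -/(rpartition_sum _ _ (fun=> 1)) -sum_rstirling2 /rbell -natz natr_sum.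
by apply: eq_bigr.
Qed.
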